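(* Let $G$ be a domino-free bipartite graph with no universal vertex, and let $\mathbf{H}(G)$ be the transitive reduction of $(\mathcal{B}(G),\preceq)$. Then every cycle of (the underlying undirected graph of) $\mathbf{H}(G)$ that does not contain $\bot$ or $\top$ has at least six non-flow-nodes.
   Context: A domino is $C_6$ plus a chord between two antipodal vertices; domino-free means no induced domino. With color classes $X,Y$, a biclique is a vertex set inducing a complete bipartite subgraph, with shores $X(B)=B\cap X$, $Y(B)=B\cap Y$; $\mathcal{B}(G)$ is the set of inclusion-wise maximal bicliques ordered by $B\preceq B'\iff X(B)\subseteq X(B')$. $\bot,\top$ are the added bottom and top elements of the Galois lattice $\mathcal{B}(G)\cup\{\bot,\top\}$. The transitive reduction has an arc $B\to B'$ iff $B'$ covers $B$. For a cycle $C$ in a directed graph (a cycle in the underlying undirected graph), a node of $C$ is a flow-node if of its two arcs in $C$ one enters and one leaves it; otherwise (both enter or both leave) it is a non-flow-node (a sink or source of $C$). A universal vertex is adjacent to all vertices of the opposite color class. *)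

From mathcomp Require Import all_boot.
Set Implicit Arguments. Unset Strict Implicit. Unset Printing Implicit Defensive.

(* A finite bipartite graph on vertex type T: adjacency e, colour class X,
   the other colour class being Y := ~: X. *)
Definition bipartite_graph (T : finType) (e : rel T) (X : {set T}) : Prop :=
  [/\ symmetric e, irreflexive e &
      forall x y, e x y -> (x \in X) != (y \in X)].

(* Adjacency of the domino: the 6-cycle 0-1-2-3-4-5-0 plus the chord 0-3. *)
Definition domino_adj (i j : 'I_6) : bool :=
  [|| (i.+1 %% 6 == j), (j.+1 %% 6 == i),
      ((i == 0 :> nat) && (j == 3 :> nat)) | ((i == 3 :> nat) && (j == 0 :> nat))].

Definition domino_free (T : finType) (e : rel T) : Prop :=
  ~ exists f : 'I_6 -> T, injective f /\ forall i j, e (f i) (f j) = domino_adj i j.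

Definition has_universal_vertex (T : finType) (e : rel T) (X : {set T}) : Prop :=
  exists v : T, forall w : T, (v \in X) != (w \in X) -> e v w.

(* Biclique: vertex set with both shores nonempty, inducing a complete
   bipartite graph (shores X(B) = B :&: X, Y(B) = B :\: X). *)
Definition biclique (T : finType) (e : rel T) (X : {set T}) (B : {set T}) : bool :=
  [&& B :&: X != set0, B :\: X != set0 &
      [forall x in B :&: X, forall y in B :\: X, e x y]].

Definition maxbiclique (T : finType) (e : rel T) (X : {set T}) (B : {set T}) : bool :=
  biclique e X B &&
  [forall B' : {set T}, biclique e X B' ==> (B \subset B') ==> (B' == B)].

Definition bprec (T : finType) (X : {set T}) (B B' : {set T}) : bool :=
  B :&: X \subset B' :&: X.

(* B' covers B in (B(G), <=): arc B -> B' of the transitive reduction H(G). *)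
Definition hcover (T : finType) (e : rel T) (X : {set T}) (B B' : {set T}) : bool :=
  [&& maxbiclique e X B, maxbiclique e X B', bprec X B B', B != B' &
      [forall C : {set T}, maxbiclique e X C ==> bprec X B C ==> bprec X C B'
                            ==> (C == B) || (C == B')]].

(* A cycle of the underlying undirected graph of H(G), given as the cyclic
   sequence s of its (distinct, at least 3) nodes. *)
Definition hcycle (T : finType) (e : rel T) (X : {set T}) (s : seq {set T}) : Prop :=
  [/\ uniq s, 2 < size s, all (maxbiclique e X) s &
      forall i, i < size s ->
        hcover e X (nth set0 s i) (nth set0 s (i.+1 %% size s)) \/
        hcover e X (nth set0 s (i.+1 %% size s)) (nth set0 s i)].

Definition edge_fwd (T : finType) (e : rel T) (X : {set T}) (s : seq {set T}) (i : nat) : bool :=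
  hcover e X (nth set0 s (i %% size s)) (nth set0 s (i.+1 %% size s)).

(* Number of non-flow nodes: node s_{i+1} lies between edges i and i+1, and
   is a non-flow node iff those two edges have different orientations
   along the cycle (both enter or both leave it). *)
Definition non_flow_count (T : finType) (e : rel T) (X : {set T}) (s : seq {set T}) : nat :=
  count (fun i => edge_fwd e X s i != edge_fwd e X s i.+1) (iota 0 (size s)).

From mathcomp Require Import all_boot zify.
Set Implicit Arguments. Unset Strict Implicit. Unset Printing Implicit Defensive.

(* Two maximal bicliques sharing an edge xy are comparable: otherwise some
   x1 in X(A) \ X(B) and x2 in X(B) \ X(A) have non-neighbours y2 in Y(B) and
   y1 in Y(A), and x y1 x1 y x2 y2 is an induced domino with chord xy.  Hence
   distinct lower covers of a node have disjoint X-shores, so they have no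
   common lower bound, and dually for upper covers.
   Along a cycle the non-flow nodes alternate between sinks and sources, so
   their number is even, and it is not 0 since a cycle cannot be monotone.  With
   two of them, the source lies below both lower covers of the sink.  With four,
   sources u1, u2 lie below sinks t1, t2, and a maximal biclique M containing
   X(u1), X(u2), Y(t1), Y(t2) satisfies u1, u2 <= M <= t1, t2; comparability
   forces M below both lower covers of t1, a contradiction again. *)

Definition turn (g : nat -> bool) i := g i != g i.+1.

Lemma odd_count_turn g b m :
  odd (count (turn g) (iota b m)) = (g b != g (b + m)).
Proof.
elim: m b => [|m IH] b /=; first by rewrite addn0 eqxx.
rewrite oddD IH addnS -addSn /turn.
by case: (g b); case: (g b.+1); case: (g _).
Qed.

Lemma count_iota_periodic (P : pred nat) n b :
  (forall i, P (i + n) = P i) -> count P (iota b n) = count P (iota 0 n).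
Proof.
move=> P_per; elim: b => // b <-; case: n P_per => // n P_per.
rewrite [iota b n.+1]/= -[n.+1]addn1 iotaD count_cat /= addn0 addSnnS P_per.
by rewrite addnC.
Qed.

Lemma exists_rise g n : 0 < n -> (forall i, g (i + n) = g i) ->
  0 < count (turn g) (iota 0 n) -> exists r, ~~ g r && g r.+1.
Proof.
move=> n_gt0 g_per; rewrite -has_count => /hasP[c _ turn_c].
have rise_from j m : ~~ g j -> g (j + m) -> exists r, ~~ g r && g r.+1.
  elim: m j => [|m IH] j gj; first by rewrite addn0 (negbTE gj).
  case gj1: (g j.+1); first by exists j; rewrite gj gj1.
  by rewrite addnS -addSn; apply: IH; rewrite gj1.
case gc: (g c) turn_c; rewrite /turn gc /= ?negbK => gc1; last by exists c; rewrite gc.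
by apply: (rise_from c.+1 n.-1) => //; rewrite addSnnS prednK // g_per.
Qed.

Fixpoint alt_runs (g : nat -> bool) (b : nat) (a : bool) (ls : seq nat) : Prop :=
  if ls is p :: ls' then
    [/\ 0 < p, forall k, b <= k < b + p -> g k = a & alt_runs g (b + p) (~~ a) ls']
  else True.

Lemma alt_runs_window g b m : exists ls,
  [/\ alt_runs g b (g b) ls, sumn ls = m.+1 & size ls = (count (turn g) (iota b m)).+1].
Proof.
elim: m b => [|m IH] b.
  by exists [:: 1]; split=> //=; split=> // k kb; have -> : k = b by lia.
have [[|p ls] [] //= [p_gt0 run runs] sum_ls /succn_inj size_ls] := IH b.+1.
rewrite -size_ls /turn.
have [gb1|gb1] := eqVneq (g b) (g b.+1).
- exists (p.+1 :: ls); rewrite -gb1 in run runs; split=> //=; try lia.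
  split=> // [k kb|]; last by rewrite addnS -addSn.
  by have [->|kb'] := eqVneq k b; last by apply: run; lia.
- have gb1' : g b.+1 = ~~ g b by move: gb1; case: (g b); case: (g b.+1).
  exists (1 :: p :: ls); rewrite gb1' in run runs; split=> //=; try lia.
  by rewrite addn1; split=> // k kb; have -> : k = b by lia.
Qed.

Lemma cyclic_runs g n : 0 < n -> (forall i, g (i + n) = g i) ->
  0 < count (turn g) (iota 0 n) -> exists b ls,
  [/\ alt_runs g b true ls, sumn ls = n & size ls = count (turn g) (iota 0 n)].
Proof.
move=> n_gt0 g_per turns; have [r /andP[gr gr1]] := exists_rise n_gt0 g_per turns.
have [ls [runs sum_ls size_ls]] := alt_runs_window g r.+1 n.-1.
exists r.+1, ls; rewrite gr1 in runs; split=> //; first by rewrite sum_ls prednK.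
have turn_per i : turn g (i + n) = turn g i by rewrite /turn -addSn !g_per.
rewrite -(count_iota_periodic r.+1 turn_per).
have -> : iota r.+1 n = iota r.+1 n.-1 ++ iota (r.+1 + n.-1) 1.
  by rewrite -iotaD addn1 prednK.
rewrite count_cat size_ls /= addn0.
by rewrite addSnnS prednK // turn_per /turn gr1 (negbTE gr) addn1.
Qed.

Section MaximalBicliques.
Variables (T : finType) (e : rel T) (X : {set T}).
Hypothesis bip : bipartite_graph e X.

Lemma adj_sym : symmetric e.
Proof. by case: bip. Qed.

Lemma adj_same_side x y : (x \in X) = (y \in X) -> e x y = false.
Proof. by case: bip => _ _ bipX xy; apply/negbTE/negP => /bipX; rewrite xy eqxx. Qed.

Lemma biclique_adj B x y : biclique e X B ->
  x \in B -> x \in X -> y \in B -> y \notin X -> e x y.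
Proof.
case/and3P=> _ _ /forall_inP adjB xB xX yB yX.
by apply: (forall_inP (adjB x _)); rewrite !inE ?xB ?xX ?yB ?yX.
Qed.

Lemma biclique_intro B : B :&: X != set0 -> B :\: X != set0 ->
  (forall x y, x \in B -> x \in X -> y \in B -> y \notin X -> e x y) ->
  biclique e X B.
Proof.
move=> BX BY adjB; rewrite /biclique BX BY; apply/forall_inP => x.
rewrite inE => /andP[xB xX]; apply/forall_inP => y.
by rewrite !inE => /andP[yX yB]; apply: adjB.
Qed.

Lemma maxbiclique_bic B : maxbiclique e X B -> biclique e X B.
Proof. by case/andP. Qed.

Lemma maxbiclique_max B B' : maxbiclique e X B ->
  biclique e X B' -> B \subset B' -> B' = B.
Proof. by case/andP=> _ /forallP/(_ B') + bB' sBB'; rewrite bB' sBB' => /eqP. Qed.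

Lemma maxbiclique_shoreX B : maxbiclique e X B -> exists2 x, x \in B & x \in X.
Proof. by case/andP=> /and3P[/set0Pn[x]]; rewrite inE => /andP[]; exists x. Qed.

Lemma maxbiclique_shoreY B : maxbiclique e X B -> exists2 y, y \in B & y \notin X.
Proof. by case/andP=> /and3P[_ /set0Pn[y]]; rewrite inE => /andP[]; exists y. Qed.

Lemma maxbiclique_adj B x y : maxbiclique e X B ->
  x \in B -> x \in X -> y \in B -> y \notin X -> e x y.
Proof. by move/maxbiclique_bic; apply: biclique_adj. Qed.

Lemma maxbiclique_mem B w : maxbiclique e X B ->
  (forall z, z \in B -> (w \in X) != (z \in X) -> e w z) -> w \in B.
Proof.
move=> mB adj_w; suff <- : w |: B = B by rewrite setU11.
apply: maxbiclique_max (subsetUr _ _) => //.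
have [x xB xX] := maxbiclique_shoreX mB; have [y yB yX] := maxbiclique_shoreY mB.
apply: biclique_intro.
- by apply/set0Pn; exists x; rewrite !inE xB xX orbT.
- by apply/set0Pn; exists y; rewrite !inE yB yX orbT.
move=> x' y' /setU1P[-> | x'B] x'X /setU1P[-> | y'B] y'X.
- by rewrite x'X in y'X.
- by apply: adj_w; rewrite ?x'X ?(negbTE y'X).
- by rewrite adj_sym; apply: adj_w; rewrite ?x'X ?(negbTE y'X).
- exact: maxbiclique_adj mB x'B x'X y'B y'X.
Qed.

Lemma maxbiclique_nadj B x : maxbiclique e X B -> x \in X -> x \notin B ->
  exists y, [/\ y \in B, y \notin X & ~~ e x y].
Proof.
move=> mB xX xB.
have /existsP[y /and3P[]] : [exists y, [&& y \in B, y \notin X & ~~ e x y]].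
  apply: contraNT xB => /existsPn no_y; apply: maxbiclique_mem mB _ => y yB.
  by rewrite xX /= => yX; move: (no_y y); rewrite yB yX negbK.
by exists y.
Qed.

Lemma maxbiclique_exists B0 : biclique e X B0 ->
  exists2 M, maxbiclique e X M & B0 \subset M.
Proof.
move=> bB0; have P0 : biclique e X B0 && (B0 \subset B0) by rewrite bB0 subxx.
have [M /andP[bM sB0M] maxM] :=
  @arg_maxnP _ B0 (fun B => biclique e X B && (B0 \subset B)) (fun B => #|B|) P0.
exists M => //; rewrite /maxbiclique bM; apply/forallP => B.
apply/implyP => bB; apply/implyP => sMB.
by rewrite eq_sym eqEcard sMB; apply: maxM; rewrite bB (subset_trans sB0M sMB).
Qed.

Lemma bprec_trans A B C : bprec X A B -> bprec X B C -> bprec X A C.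
Proof. exact: subset_trans. Qed.

Lemma bprec_memX B B' x : bprec X B B' -> x \in B -> x \in X -> x \in B'.
Proof. by move=> /subsetP/(_ x); rewrite !inE => + xB xX; rewrite xB xX => /(_ isT)/andP[]. Qed.

Lemma bprec_memY B B' y : maxbiclique e X B -> maxbiclique e X B' ->
  bprec X B B' -> y \in B' -> y \notin X -> y \in B.
Proof.
move=> mB mB' sBB' yB' yX; apply: maxbiclique_mem mB _ => x xB.
rewrite (negbTE yX) /= => /negPn xX; rewrite adj_sym.
exact: maxbiclique_adj mB' (bprec_memX sBB' xB xX) xX yB' yX.
Qed.

Lemma bprec_shoreY B B' : maxbiclique e X B -> maxbiclique e X B' ->
  (forall y, y \in B' -> y \notin X -> y \in B) -> bprec X B B'.
Proof.
move=> mB mB' sY; apply/subsetP => x; rewrite !inE => /andP[xB xX]; rewrite xX andbT.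
apply: maxbiclique_mem mB' _ => y yB'; rewrite xX /= => yX.
exact: maxbiclique_adj mB xB xX (sY _ yB' yX) yX.
Qed.

Lemma bprec_anti B B' : maxbiclique e X B -> maxbiclique e X B' ->
  bprec X B B' -> bprec X B' B -> B = B'.
Proof.
move=> mB mB' sBB' sB'B; apply/setP => z.
by case: (boolP (z \in X)) => zX; apply/idP/idP => zin;
  [exact: bprec_memX sBB' zin zX | exact: bprec_memX sB'B zin zX
  | exact: bprec_memY mB' mB sB'B zin zX | exact: bprec_memY mB mB' sBB' zin zX].
Qed.

Lemma maxbiclique_between u1 u2 t1 t2 :
  maxbiclique e X u1 -> maxbiclique e X u2 -> maxbiclique e X t1 -> maxbiclique e X t2 ->
  bprec X u1 t1 -> bprec X u1 t2 -> bprec X u2 t1 -> bprec X u2 t2 ->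
  exists2 M, maxbiclique e X M &
    [/\ bprec X u1 M, bprec X u2 M, bprec X M t1 & bprec X M t2].
Proof.
move=> mu1 mu2 mt1 mt2 u1t1 u1t2 u2t1 u2t2.
pose B0 := (u1 :|: u2) :&: X :|: (t1 :|: t2) :\: X.
have [x xu1 xX] := maxbiclique_shoreX mu1; have [y yt1 yX] := maxbiclique_shoreY mt1.
have bB0 : biclique e X B0.
  apply: biclique_intro.
  - by apply/set0Pn; exists x; rewrite !inE xu1 xX /=.
  - by apply/set0Pn; exists y; rewrite !inE yt1 yX orbT /=.
  move=> x' y'; rewrite !inE => + x'X + y'X; rewrite x'X (negbTE y'X) /= andbF andbT orbF /=.
  move=> x'u /orP[] y't; [apply: (maxbiclique_adj mt1) | apply: (maxbiclique_adj mt2)] => //;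
    by case/orP: x'u => x'u; apply: bprec_memX x'u x'X.
have [M mM sB0M] := maxbiclique_exists bB0; exists M => //.
have uM (u : {set T}) : u \subset u1 :|: u2 -> bprec X u M.
  move=> su; apply/subsetP => z /setIP[zu zX]; rewrite inE zX andbT.
  by apply: (subsetP sB0M); apply/setUP; left; apply/setIP; split; [apply: (subsetP su) |].
have Mt (t : {set T}) : maxbiclique e X t -> t \subset t1 :|: t2 -> bprec X M t.
  move=> mt st; apply: bprec_shoreY => // z zt zX.
  by apply: (subsetP sB0M); apply/setUP; right; apply/setDP; split; [apply: (subsetP st) |].
by split; [apply: uM | apply: uM | apply: Mt | apply: Mt]; rewrite ?subsetUl ?subsetUr.
Qed.

Lemma hcover_maxl a b : hcover e X a b -> maxbiclique e X a.
Proof. by case/and5P. Qed.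

Lemma hcover_maxr a b : hcover e X a b -> maxbiclique e X b.
Proof. by case/and5P. Qed.

Lemma hcover_bprec a b : hcover e X a b -> bprec X a b.
Proof. by case/and5P. Qed.

Lemma hcover_neq a b : hcover e X a b -> a != b.
Proof. by case/and5P. Qed.

Lemma hcover_between a b C : hcover e X a b ->
  maxbiclique e X C -> bprec X a C -> bprec X C b -> C = a \/ C = b.
Proof.
case/and5P=> _ _ _ _ /forallP/(_ C) + mC aC Cb.
by rewrite mC aC Cb => /orP[] /eqP; [left | right].
Qed.

Lemma hcover_nbprec a b : hcover e X a b -> ~~ bprec X b a.
Proof.
move=> Hab; apply/negP => ba; move: (hcover_neq Hab).
by rewrite (bprec_anti (hcover_maxl Hab) (hcover_maxr Hab) (hcover_bprec Hab) ba) eqxx.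
Qed.

Hypothesis dom : domino_free e.

Lemma no_domino_copy (g : 'I_6 -> T) :
  ~ (forall i j, e (g i) (g j) = domino_adj i j).
Proof.
move=> g_adj; apply: dom; exists g; split=> // i j gij.
apply/eqP; apply: contraT => nij.
(* distinct vertices of the domino have distinct neighbourhoods *)
suff [k] : exists k, domino_adj i k != domino_adj j k by rewrite -!g_adj gij eqxx.
clear gij; move: i j nij; do 2 case=> [[|[|[|[|[|[|]]]]]] ?] //.
all: move=> _; by [exists (@Ordinal 6 0 isT) | exists (@Ordinal 6 1 isT)
  | exists (@Ordinal 6 2 isT) | exists (@Ordinal 6 3 isT)
  | exists (@Ordinal 6 4 isT) | exists (@Ordinal 6 5 isT)].
Qed.

Lemma maxbiclique_comparable A B x y : maxbiclique e X A -> maxbiclique e X B ->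
  x \in A -> x \in B -> x \in X -> y \in A -> y \in B -> y \notin X ->
  bprec X A B || bprec X B A.
Proof.
move=> mA mB xA xB xX yA yB yX; apply/norP => -[/subsetPn[x1 /setIP[x1A x1X] x1B]].
move=> /subsetPn[x2 /setIP[x2B x2X] x2A].
rewrite inE x1X andbT in x1B; rewrite inE x2X andbT in x2A.
have [y2 [y2B y2X nx1y2]] := maxbiclique_nadj mB x1X x1B.
have [y1 [y1A y1X nx2y1]] := maxbiclique_nadj mA x2X x2A.
apply: (@no_domino_copy (fun i => nth x [:: x; y1; x1; y; x2; y2] i)).
do 2 case=> [[|[|[|[|[|[|]]]]]] ?] //=; rewrite /domino_adj /=;
  rewrite ?[e y _]adj_sym ?[e y1 _]adj_sym ?[e y2 _]adj_sym;
  first [ by apply: adj_same_side;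
            rewrite ?xX ?x1X ?x2X ?(negbTE yX) ?(negbTE y1X) ?(negbTE y2X)
        | by apply: (maxbiclique_adj mA) | by apply: (maxbiclique_adj mB)
        | by apply/negbTE ].
Qed.

Lemma lower_covers_eq a b t S : hcover e X a t -> hcover e X b t ->
  maxbiclique e X S -> bprec X S a -> bprec X S b -> a = b.
Proof.
move=> Hat Hbt mS Sa Sb; have [x xS xX] := maxbiclique_shoreX mS.
have mt := hcover_maxr Hat; have [y yt yX] := maxbiclique_shoreY mt.
wlog ab : a b Hat Hbt Sa Sb / bprec X a b.
  move=> wlog_ab; have ma := hcover_maxl Hat; have mb := hcover_maxl Hbt.
  case/orP: (maxbiclique_comparable ma mb (bprec_memX Sa xS xX) (bprec_memX Sb xS xX) xX
    (bprec_memY ma mt (hcover_bprec Hat) yt yX) (bprec_memY mb mt (hcover_bprec Hbt) yt yX) yX).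
  - exact: wlog_ab.
  - by move=> ba; symmetry; apply: wlog_ab.
case: (hcover_between Hat (hcover_maxl Hbt) ab (hcover_bprec Hbt)) => // bt.
by move: (hcover_neq Hbt); rewrite bt eqxx.
Qed.

Lemma upper_covers_eq u c d S : hcover e X u c -> hcover e X u d ->
  maxbiclique e X S -> bprec X c S -> bprec X d S -> c = d.
Proof.
move=> Huc Hud mS cS dS; have [y yS yX] := maxbiclique_shoreY mS.
have [x xu xX] := maxbiclique_shoreX (hcover_maxl Huc).
wlog cd : c d Huc Hud cS dS / bprec X c d.
  move=> wlog_cd; have mc := hcover_maxr Huc; have md := hcover_maxr Hud.
  case/orP: (maxbiclique_comparable mc md (bprec_memX (hcover_bprec Huc) xu xX)
    (bprec_memX (hcover_bprec Hud) xu xX) xX (bprec_memY mc mS cS yS yX)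
    (bprec_memY md mS dS yS yX) yX).
  - exact: wlog_cd.
  - by move=> dc; symmetry; apply: wlog_cd.
case: (hcover_between Hud (hcover_maxr Huc) (hcover_bprec Huc) cd) => // cu.
by move: (hcover_neq Huc); rewrite cu eqxx.
Qed.

Lemma below_lower_cover a t M x : hcover e X a t -> maxbiclique e X M ->
  bprec X M t -> M != t -> x \in M -> x \in a -> x \in X -> bprec X M a.
Proof.
move=> Hat mM Mt /eqP nMt xM xa xX; have mt := hcover_maxr Hat; have ma := hcover_maxl Hat.
have [y yt yX] := maxbiclique_shoreY mt.
have yM := bprec_memY mM mt Mt yt yX; have ya := bprec_memY ma mt (hcover_bprec Hat) yt yX.
case/orP: (maxbiclique_comparable mM ma xM xa xX yM ya yX) => // aM.
by case: (hcover_between Hat mM aM Mt) => // ->; apply: subxx.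
Qed.

Lemma crown_absurd t1 t2 u1 u2 a b c d :
  hcover e X a t1 -> hcover e X b t1 -> a != b -> bprec X u1 a -> bprec X u2 b ->
  hcover e X u1 c -> hcover e X u1 d -> c != d -> bprec X c t1 -> bprec X d t2 ->
  bprec X u2 t2 -> maxbiclique e X u2 -> maxbiclique e X t2 -> False.
Proof.
move=> Hat1 Hbt1 /eqP nab u1a u2b Hu1c Hu1d /eqP ncd ct1 dt2 u2t2 mu2 mt2.
have mt1 := hcover_maxr Hat1; have mu1 := hcover_maxl Hu1c.
have [M mM [u1M u2M Mt1 Mt2]] := maxbiclique_between mu1 mu2 mt1 mt2
  (bprec_trans u1a (hcover_bprec Hat1)) (bprec_trans (hcover_bprec Hu1d) dt2)
  (bprec_trans u2b (hcover_bprec Hbt1)) u2t2.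
have nMt1 : M != t1.
  apply/eqP => Mt1E; apply: ncd (upper_covers_eq Hu1c Hu1d mt2 _ dt2).
  by rewrite -Mt1E in ct1; apply: bprec_trans ct1 Mt2.
have [x1 x1u1 x1X] := maxbiclique_shoreX mu1; have [x2 x2u2 x2X] := maxbiclique_shoreX mu2.
apply: nab (lower_covers_eq Hat1 Hbt1 mM _ _).
- exact: below_lower_cover Hat1 mM Mt1 nMt1
    (bprec_memX u1M x1u1 x1X) (bprec_memX u1a x1u1 x1X) x1X.
- exact: below_lower_cover Hbt1 mM Mt1 nMt1
    (bprec_memX u2M x2u2 x2X) (bprec_memX u2b x2u2 x2X) x2X.
Qed.

Section ClosedWalk.
Variables (v : nat -> {set T}) (n : nat).
Hypothesis n_gt0 : 0 < n.
Hypothesis walk_per : forall i, v (i + n) = v i.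
Hypothesis walk_step : forall i, hcover e X (v i) (v i.+1) \/ hcover e X (v i.+1) (v i).
Hypothesis walk_ne2 : forall i, v i != v i.+2.

Definition fwd i := hcover e X (v i) (v i.+1).

Lemma fwd_per i : fwd (i + n) = fwd i.
Proof. by rewrite /fwd -addSn !walk_per. Qed.

Lemma bwd_cover i : fwd i = false -> hcover e X (v i.+1) (v i).
Proof. by rewrite /fwd; case: (walk_step i) => // ->. Qed.

Lemma walk_max i : maxbiclique e X (v i).
Proof. by case: (walk_step i) => [/hcover_maxl | /hcover_maxr]. Qed.

Lemma fwd_run_bprec a m i j : (forall k, a <= k < a + m -> fwd k) ->
  a <= i <= j -> j <= a + m -> bprec X (v i) (v j).
Proof.
move=> run; elim: j => [|j IH] ij jm; first by have -> : i = 0 by [lia]; apply: subxx.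
have [->|ij'] := eqVneq i j.+1; first exact: subxx.
apply: bprec_trans (IH _ _) (hcover_bprec (run j _)); lia.
Qed.

Lemma bwd_run_bprec a m i j : (forall k, a <= k < a + m -> fwd k = false) ->
  a <= i <= j -> j <= a + m -> bprec X (v j) (v i).
Proof.
move=> run; elim: j => [|j IH] ij jm; first by have -> : i = 0 by [lia]; apply: subxx.
have [->|ij'] := eqVneq i j.+1; first exact: subxx.
apply: bprec_trans (hcover_bprec (bwd_cover (run j _))) (IH _ _); lia.
Qed.

Lemma walk_turns : 0 < count (turn fwd) (iota 0 n).
Proof.
rewrite -has_count; apply: contraT => /hasPn no_turn.
have fwd0 k : k <= n -> fwd k = fwd 0.
  elim: k => // k IH kn; rewrite -IH ?(ltnW kn) //.
  by apply/esym/eqP/negPn; apply: no_turn; rewrite mem_iota.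
have vn : v n = v 0 by rewrite -[n]add0n walk_per.
case f0: (fwd 0).
- have /negP[] := hcover_nbprec f0; rewrite -vn.
  by apply: (fwd_run_bprec (a := 1) (m := n.-1)) => [k kn||]; rewrite ?fwd0 //; lia.
- have /negP[] := hcover_nbprec (bwd_cover f0); rewrite -vn.
  by apply: (bwd_run_bprec (a := 1) (m := n.-1)) => [k kn||]; rewrite ?fwd0 //; lia.
Qed.

Lemma two_turns_absurd b p q : alt_runs fwd b true [:: p; q] -> p + q = n -> False.
Proof.
case: p => [[]//|p] [_ up [q_gt0 down _]] pqn.
have Hat : hcover e X (v (b + p)) (v (b + p).+1) by apply: up; lia.
have Hbt : hcover e X (v (b + p).+2) (v (b + p).+1) by apply: bwd_cover; apply: down; lia.
apply/negP: (walk_ne2 (b + p)); apply/negPn/eqP.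
apply: (lower_covers_eq Hat Hbt (walk_max b)); first by apply: (fwd_run_bprec up); lia.
by rewrite -(walk_per b); apply: (bwd_run_bprec down); lia.
Qed.

Lemma four_turns_absurd b p1 q1 p2 q2 :
  alt_runs fwd b true [:: p1; q1; p2; q2] -> p1 + q1 + p2 + q2 = n -> False.
Proof.
case: p1 => [[]//|p]; case: q2 => [[_ _ [_ _ [_ _ [] //]]]|q].
move=> [_ up1 [q1_gt0 down1 [p2_gt0 up2 [_ down2 _]]]] sum.
(* sinks v (b + p).+1 and v s3, sources v s2 and v b = v (b + n) *)
set s2 := b + p.+1 + q1; set s3 := s2 + p2.
have end_eq : (s3 + q).+1 = b + n by rewrite /s3 /s2; lia.
apply: (@crown_absurd (v (b + p).+1) (v s3) (v b) (v s2)
  (v (b + p)) (v (b + p).+2) (v b.+1) (v (s3 + q))).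
- by apply: up1; lia.
- by apply: bwd_cover; apply: down1; lia.
- exact: walk_ne2.
- by apply: (fwd_run_bprec up1); lia.
- by apply: (bwd_run_bprec down1); rewrite /s2; lia.
- by apply: up1; lia.
- by rewrite -(walk_per b) -end_eq; apply: bwd_cover; apply: down2; rewrite /s3; lia.
- by rewrite eq_sym -(walk_per b.+1) addSn -end_eq; apply: walk_ne2.
- by apply: (fwd_run_bprec up1); lia.
- by apply: (bwd_run_bprec down2); rewrite /s3; lia.
- by apply: (fwd_run_bprec up2); rewrite /s3 /s2; lia.
- exact: walk_max.
- exact: walk_max.
Qed.

Lemma walk_turns_ge6 : 6 <= count (turn fwd) (iota 0 n).
Proof.
have even_turns : ~~ odd (count (turn fwd) (iota 0 n)).
  by rewrite odd_count_turn fwd_per eqxx.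
have [b [ls [runs sum_ls size_ls]]] := cyclic_runs n_gt0 fwd_per walk_turns.
rewrite -size_ls in even_turns *; clear size_ls.
case: ls runs sum_ls even_turns => [|p1 [|q1 [|p2 [|q2 [|? [|? ?]]]]]] //= runs sum_ls _.
- by move: n_gt0; rewrite -sum_ls.
- by exfalso; apply: (two_turns_absurd runs); lia.
- by exfalso; apply: (four_turns_absurd runs); lia.
Qed.

End ClosedWalk.

End MaximalBicliques.

Theorem lemma2 (T : finType) (e : rel T) (X : {set T}) :
  bipartite_graph e X ->
  domino_free e ->
  ~ has_universal_vertex e X ->
  forall s : seq {set T}, hcycle e X s -> 6 <= non_flow_count e X s.
Proof.
move=> bip dom _ s [uniq_s s_gt2 _ steps].
pose v i := nth set0 s (i %% size s).
have s_gt0 : 0 < size s by lia.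
have modS i : (i %% size s).+1 %% size s = i.+1 %% size s.
  by rewrite -addn1 modnDml addn1.
have -> : non_flow_count e X s = count (turn (fwd e X v)) (iota 0 (size s)) by [].
apply: (walk_turns_ge6 bip dom s_gt0) => [i | i | i].
- by rewrite /v modnDr.
- by rewrite /v -modS; apply: steps; rewrite ltn_pmod.
- rewrite /v nth_uniq ?ltn_pmod // -[i.+2]addn2 -[X in X %% _ == _]addn0 eqn_modDl.
  by rewrite mod0n modn_small.
Qed.
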